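(* Let $K=4$ and let $M$ be an integer with $1\le M\le 15$. Index antennas by $\{1,\dots,4M\}$ and let $I_i=\{(i-1)M+1,\dots,iM\}$ for $i=1,\dots,4$. For generic $H,U,W\in\mathbb{C}^{4M\times 4M}$ (that is, outside the zero set of some nonzero polynomial in their entries), there exist block diagonal matrices $D_1,D_2,D_3\in\mathbb{C}^{4M\times 4M}$ with diagonal blocks of size $M\times M$ (block $i$ indexed by $I_i$) and scalars $\lambda_1,\dots,\lambda_{4M}\in\mathbb{C}$ such that, with $B:=HD_1+HD_2U+WD_3H$: for every $i$ and every $m\in I_i$, $B_{mj}=\lambda_m H_{mj}$ for all $j\notin I_i$; and for every $i$, the $M\times M$ matrix $\big(B_{mm'}-\lambda_m H_{mm'}\big)_{m,m'\in I_i}$ is nonsingular.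
   Context: Setting: a 4-user MIMO interference channel with full-duplex in-band interaction, each source and destination having $M$ antennas; antennas of user $i$ are indexed by $I_i$. $H$ is the channel matrix from source antennas to destination antennas, $U$ among source antennas, $W$ among destination antennas. In a two-phase scheme sources send $x$ (receiving $Ux$ while destinations receive $Hx$), then sources send $D_1x+D_2Ux$ and destinations send $D_3Hx$, so destinations receive $Bx$ (noise ignored). The conditions imply each destination can cancel all interference and recover its $M$ desired symbols, giving $2M$ sum degrees of freedom. *)

From HB Require Import structures.
From mathcomp Require Import all_boot all_order all_algebra.
From mathcomp Require Import complex.
From mathcomp Require Import Rstruct.
From mathcomp Require Import mpoly.
From Stdlib Require Import Rdefinitions.
Set Implicit Arguments. Unset Strict Implicit. Unset Printing Implicit Defensive.
Import GRing.Theory.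

Local Open Scope ring_scope.
Definition C : Type := complex Rdefinitions.R.
HB.instance Definition _ := GRing.ClosedField.on C.

(* Antennas are indexed (0-based) by 'I_(4*M); antenna m belongs to user
   block m %/ M (0-based), i.e. I_(i+1) = {m | m %/ M = i}. *)
Definition blk (M : nat) (m : 'I_(4 * M)) : nat := divn (nat_of_ord m) M.

Definition block_diag (M : nat) (D : 'M[C]_(4 * M)) : Prop :=
  forall m j : 'I_(4 * M), blk m <> blk j -> D m j = 0.

Local Close Scope ring_scope.
Lemma antenna_idx_proof (M : nat) (i : 'I_4) (a : 'I_M) : (nat_of_ord i * M + nat_of_ord a < 4 * M)%N.
Proof.
case: i => i /= Hi; case: a => a /= Ha.
have H1 : (i * M + a < i * M + M)%N by rewrite ltn_add2l.
apply: (leq_trans H1).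
have -> : (i * M + M = i.+1 * M)%N by rewrite mulSn addnC.
by rewrite leq_mul2r Hi orbT.
Qed.

Local Open Scope ring_scope.
Definition antenna (M : nat) (i : 'I_4) (a : 'I_M) : 'I_(4 * M) :=
  Ordinal (antenna_idx_proof i a).

(* vector of all entries of H, U, W, used as the variables of a polynomial *)
Definition entries (M : nat) (H U W : 'M[C]_(4 * M)) :
  'I_(4 * M * (4 * M + 4 * M + 4 * M)) -> C :=
  fun k => mxvec (row_mx (row_mx H U) W) 0 k.

From HB Require Import structures.
From mathcomp Require Import all_boot all_order all_algebra.
From mathcomp Require Import complex Rstruct mpoly.
From mathcomp Require Import ring zify.
Set Implicit Arguments. Unset Strict Implicit. Unset Printing Implicit Defensive.
Import GRing.Theory Num.Theory.
Local Open Scope ring_scope.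

(* Fix [lambda_m := d * w_(user m)] with fixed weights [w] and a common scale
   [d].  The requirements "every [Dk] is block diagonal" and "off the diagonal
   blocks, [B_mj = lambda_m H_mj]" are then a square linear system in the
   entries of the diagonal blocks of [D1, D2, D3] (12 M^2 unknowns, 12 M^2
   equations), with coefficients polynomial in [H, U, W].  Taking [d] to be
   its determinant, the adjugate gives a solution polynomial in [H, U, W], so
   the product [P] of the determinants of the four diagonal blocks of
   [B - lambda H] is a polynomial, and wherever [P] does not vanish the
   solution has all required properties.  [P] is not the zero polynomial: at a
   point where [H, U, W] are Kronecker products [g ⊗ I_M] of explicit integer
   4 x 4 matrices, the system is injective and its solution makes every
   diagonal block of [B - lambda H] a nonzero multiple of [I_M]. *)

Section CramerLinear.
Variables (R : comNzRingType) (m n : nat) (f : {linear 'M[R]_(m, n) -> 'M[R]_(m, n)}).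

Definition cramer (Y : 'M[R]_(m, n)) : 'M[R]_(m, n) :=
  vec_mx (mxvec Y *m \adj (lin_mx f)).

Lemma cramerP Y : f (cramer Y) = \det (lin_mx f) *: Y.
Proof.
apply: (can_inj mxvecK); rewrite -mul_vec_lin vec_mxK -mulmxA.
by rewrite mul_adj_mx mul_mx_scalar linearZ.
Qed.

Lemma cramer_image Z : cramer (f Z) = \det (lin_mx f) *: Z.
Proof.
by rewrite /cramer -mul_vec_lin -mulmxA mul_mx_adj mul_mx_scalar linearZ /= mxvecK.
Qed.

End CramerLinear.

Lemma det_lin_mx_neq0 (F : fieldType) m n (f : {linear 'M[F]_(m, n) -> 'M[F]_(m, n)}) :
  (forall Z, f Z = 0 -> Z = 0) -> \det (lin_mx f) != 0.
Proof.
move=> f_inj; apply/det0P => -[v v_neq0 v_ker].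
have /f_inj v0 : f (vec_mx v) = 0 by rewrite -mx_rV_lin v_ker linear0.
by move: v_neq0; rewrite -(vec_mxK v) v0 linear0 eqxx.
Qed.

Lemma map_cramer (R1 R2 : comNzRingType) (g : {rmorphism R1 -> R2}) m n
    (f1 : {linear 'M[R1]_(m, n) -> 'M[R1]_(m, n)})
    (f2 : {linear 'M[R2]_(m, n) -> 'M[R2]_(m, n)}) :
  (forall A, map_mx g (f1 A) = f2 (map_mx g A)) ->
  [/\ g (\det (lin_mx f1)) = \det (lin_mx f2)
    & forall Y, map_mx g (cramer f1 Y) = cramer f2 (map_mx g Y)].
Proof.
move=> f12; have mapL : map_mx g (lin_mx f1) = lin_mx f2 by apply: map_lin_mx.
split; first by rewrite -det_map_mx mapL.
by move=> Y; rewrite /cramer map_vec_mx map_mxM map_mxvec map_mx_adj mapL.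
Qed.

Section Antennas.
Variable M : nat.
Local Notation n := (4 * M)%N.

Local Open Scope nat_scope.

Lemma blk_lt4 (m : 'I_n) : blk m < 4.
Proof. by rewrite /blk ltn_divLR ?(ltn_ord m) //; case: M m => [[]|]. Qed.

Lemma ant_proof (i : nat) (a : 'I_M) : i %% 4 * M + a < n.
Proof.
have := ltn_ord a; have : i %% 4 < 4 by rewrite ltn_pmod.
move: (i %% 4) (nat_of_ord a) => q r; nia.
Qed.

(* [ant i a] is the antenna [a] of user [i] read modulo 4, so that the cyclic
   successor of a user is available as [i + 1]. *)
Definition ant (i : nat) (a : 'I_M) : 'I_n := Ordinal (ant_proof i a).

Lemma offset_proof (m : 'I_n) : m %% M < M.
Proof. by rewrite ltn_pmod //; case: M m => [[]|]. Qed.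

Definition offset (m : 'I_n) : 'I_M := Ordinal (offset_proof m).
Definition user (m : 'I_n) : 'I_4 := Ordinal (blk_lt4 m).

Lemma blk_ant i a : blk (ant i a) = i %% 4.
Proof. by rewrite /blk /= divnMDl ?divn_small ?addn0 //; case: M a => [[]|]. Qed.

Lemma offset_ant i a : offset (ant i a) = a.
Proof. by apply: val_inj; rewrite /= modnMDl modn_small. Qed.

Lemma antK (m : 'I_n) : ant (blk m) (offset m) = m.
Proof. by apply: val_inj; rewrite /= modn_small ?blk_lt4 // /blk -divn_eq. Qed.

Lemma ant_mod i a : ant (i %% 4) a = ant i a.
Proof. by apply: val_inj; rewrite /= modn_mod. Qed.

Lemma antenna_ant (i : 'I_4) a : antenna i a = ant i a.
Proof. by apply: val_inj; rewrite /= modn_small. Qed.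

Lemma ant_eq i j a b : (ant i a == ant j b) = (i %% 4 == j %% 4) && (a == b).
Proof.
apply/eqP/andP => [e | [/eqP ei /eqP ->]]; last by rewrite -ant_mod ei ant_mod.
by split; apply/eqP; [rewrite -(blk_ant i a) e blk_ant | rewrite -(offset_ant i a) e offset_ant].
Qed.

Lemma blk_shift_ant (m j : 'I_n) : blk m <> blk j ->
  exists2 t, t < 3 & ant (blk m + t.+1) (offset j) = j.
Proof.
move=> neq_mj.
suff [t t_lt3 e] : exists2 t, t < 3 & (blk m + t.+1) %% 4 = blk j.
  by exists t => //; rewrite -ant_mod e antK.
move: (blk_lt4 m) (blk_lt4 j) neq_mj.
case: (blk m) => [|[|[|[|//]]]]; case: (blk j) => [|[|[|[|//]]]] //= _ _ _;
  by [exists 0 | exists 1 | exists 2].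
Qed.

Local Open Scope ring_scope.

Lemma sum_ant (R : nmodType) (F : 'I_n -> R) :
  \sum_(k < n) F k = \sum_(i < 4) \sum_(a < M) F (ant i a).
Proof.
rewrite pair_big /= (reindex (fun p : 'I_4 * 'I_M => ant p.1 p.2)) //=.
exists (fun k => (user k, offset k)) => [[i a] _ | k _] /=; last by rewrite antK.
by rewrite offset_ant; congr pair; apply: val_inj; rewrite /= blk_ant modn_small.
Qed.

End Antennas.

Arguments ant : simpl never.

Section ConstraintSystem.
Variables (R : comNzRingType) (M : nat).
Local Notation n := (4 * M)%N.
Local Notation n3 := (4 * M + 4 * M + 4 * M)%N.
Implicit Types (A H U W : 'M[R]_n) (Z : 'M[R]_(n, n3)).

Definition diag_blocks A : 'M[R]_n :=
  \matrix_(m, j) if blk m == blk j then A m j else 0.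

Definition offdiag_blocks A : 'M[R]_n :=
  \matrix_(m, j) if blk m == blk j then 0 else A m j.

(* Moves the block of [A] in block-column [i + t + 1] (mod 4) of each
   block-row [i] onto the diagonal block [i]. *)
Definition shift_blocks (t : nat) A : 'M[R]_n :=
  \matrix_(m, j) A m (ant (blk j + t.+1) (offset j)).

Definition Bmx H U W (D1 D2 D3 : 'M[R]_n) : 'M[R]_n := H *m D1 + H *m D2 *m U + W *m D3 *m H.

Definition D1_of Z : 'M[R]_n := lsubmx (lsubmx Z).
Definition D2_of Z : 'M[R]_n := rsubmx (lsubmx Z).
Definition D3_of Z : 'M[R]_n := rsubmx Z.
Definition B_of H U W Z := Bmx H U W (D1_of Z) (D2_of Z) (D3_of Z).

(* With [Z = (D1 D2 D3)], the equation [constraint H U W Z = constraint_rhs H d]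
   says that every [Dk] is block diagonal and that the three off-diagonal
   block-diagonals of [B_of H U W Z] agree with those of [lambdaH d H]:
   a square linear system in the entries of [Z]. *)
Definition constraint H U W Z : 'M[R]_(n, n3) :=
  row_mx (row_mx (offdiag_blocks (D1_of Z) + diag_blocks (shift_blocks 0 (B_of H U W Z)))
                 (offdiag_blocks (D2_of Z) + diag_blocks (shift_blocks 1 (B_of H U W Z))))
         (offdiag_blocks (D3_of Z) + diag_blocks (shift_blocks 2 (B_of H U W Z))).

(* Any weights making the witness below work would do. *)
Definition user_weight (i : nat) : int := match i with 0 => 1 | 1 => 2 | _ => 0 end.

Definition lambda_of (d : R) (m : 'I_n) : R := d * (user_weight (blk m))%:~R.

Definition lambdaH d H : 'M[R]_n := \matrix_(m, j) (lambda_of d m * H m j).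

Definition constraint_rhs H d : 'M[R]_(n, n3) :=
  row_mx (row_mx (diag_blocks (shift_blocks 0 (lambdaH d H)))
                 (diag_blocks (shift_blocks 1 (lambdaH d H))))
         (diag_blocks (shift_blocks 2 (lambdaH d H))).

Lemma diag_blocks_is_linear : linear diag_blocks.
Proof. by move=> a A B; apply/matrixP=> i j; rewrite !mxE; case: ifP; rewrite ?mulr0 ?addr0. Qed.

Lemma offdiag_blocks_is_linear : linear offdiag_blocks.
Proof. by move=> a A B; apply/matrixP=> i j; rewrite !mxE; case: ifP; rewrite ?mulr0 ?addr0. Qed.

Lemma shift_blocks_is_linear t : linear (shift_blocks t).
Proof. by move=> a A B; apply/matrixP=> i j; rewrite !mxE. Qed.

Lemma Bmx_linearP H U W a (D1 D2 D3 E1 E2 E3 : 'M[R]_n) :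
  Bmx H U W (a *: D1 + E1) (a *: D2 + E2) (a *: D3 + E3) =
  a *: Bmx H U W D1 D2 D3 + Bmx H U W E1 E2 E3.
Proof.
rewrite /Bmx !(mulmxDr, mulmxDl) -!scalemxAr -!scalemxAl !scalerDr.
by rewrite (addrACA _ (a *: (W *m D3 *m H))) (addrACA (a *: (H *m D1))).
Qed.

Lemma B_ofZ H U W d Z : B_of H U W (d *: Z) = d *: B_of H U W Z.
Proof.
rewrite /B_of /D1_of /D2_of /D3_of !linearZ /= /Bmx -!scalemxAr -!scalemxAl.
by rewrite !scalerDr.
Qed.

Lemma diag_offdiag_blocksE D A m j :
  (offdiag_blocks D + diag_blocks A) m j = if blk m == blk j then A m j else D m j.
Proof. by rewrite !mxE; case: ifP; rewrite ?add0r ?addr0. Qed.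

End ConstraintSystem.

HB.instance Definition _ (R : comNzRingType) M := GRing.isLinear.Build R _ _ *:%R
  (@diag_blocks R M) (@diag_blocks_is_linear R M).
HB.instance Definition _ (R : comNzRingType) M := GRing.isLinear.Build R _ _ *:%R
  (@offdiag_blocks R M) (@offdiag_blocks_is_linear R M).
HB.instance Definition _ (R : comNzRingType) M t := GRing.isLinear.Build R _ _ *:%R
  (@shift_blocks R M t) (@shift_blocks_is_linear R M t).

Lemma constraint_is_linear (R : comNzRingType) M (H U W : 'M[R]_(4 * M)) :
  linear (constraint H U W).
Proof.
move=> a Z1 Z2; rewrite /constraint /B_of /D1_of /D2_of /D3_of !linearP Bmx_linearP !linearP.
rewrite scale_row_mx add_row_mx scale_row_mx add_row_mx !scalerDr.
by congr (row_mx (row_mx _ _) _); apply: addrACA.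
Qed.

HB.instance Definition _ (R : comNzRingType) M H U W := GRing.isLinear.Build R _ _ *:%R
  (@constraint R M H U W) (@constraint_is_linear R M H U W).

Section Solution.
Variables (R : comNzRingType) (M : nat).
Local Notation n := (4 * M)%N.
Implicit Types (H U W : 'M[R]_n).

Definition sys_det H U W : R := \det (lin_mx (constraint H U W)).

Definition solution H U W := cramer (constraint H U W) (constraint_rhs H 1).

Definition residual H U W (i : 'I_4) : 'M[R]_M :=
  \matrix_(a, b) (B_of H U W (solution H U W) (antenna i a) (antenna i b)
                   - lambda_of (sys_det H U W) (antenna i a) * H (antenna i a) (antenna i b)).

Lemma constraint_rhsZ H d : constraint_rhs H d = d *: constraint_rhs H 1.
Proof.
rewrite /constraint_rhs.
have -> : lambdaH d H = d *: lambdaH 1 H.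
  by apply/matrixP=> i j; rewrite !mxE /lambda_of mul1r mulrA.
by rewrite !linearZ /= !scale_row_mx.
Qed.

Lemma constraint_solution H U W :
  constraint H U W (solution H U W) = constraint_rhs H (sys_det H U W).
Proof. by rewrite cramerP [RHS]constraint_rhsZ. Qed.

End Solution.

Section RhsEquation.
Variable M : nat.
Local Notation n := (4 * M)%N.
Local Notation n3 := (4 * M + 4 * M + 4 * M)%N.

Lemma constraint_eq_rhs (H U W : 'M[C]_n) (Z : 'M[C]_(n, n3)) d :
  constraint H U W Z = constraint_rhs H d ->
  [/\ block_diag (D1_of Z), block_diag (D2_of Z), block_diag (D3_of Z) &
      forall m j, blk m <> blk j -> B_of H U W Z m j = lambda_of d m * H m j].
Proof.
rewrite /constraint /constraint_rhs => /eq_row_mx [/eq_row_mx [E1 E2] E3].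
have offdiag0 (D A A' : 'M[C]_n) :
    offdiag_blocks D + diag_blocks A = diag_blocks A' -> block_diag D.
  move=> e m j /eqP/negPf neq; have := congr1 (fun X : 'M_n => X m j) e.
  by rewrite diag_offdiag_blocksE mxE neq.
have diag_eq (D A A' : 'M[C]_n) : offdiag_blocks D + diag_blocks A = diag_blocks A' ->
    forall m j, blk m = blk j -> A m j = A' m j.
  move=> e m j eq_mj; have := congr1 (fun X : 'M_n => X m j) e.
  by rewrite diag_offdiag_blocksE mxE eq_mj eqxx.
split; [exact: offdiag0 E1 | exact: offdiag0 E2 | exact: offdiag0 E3 |].
move=> m j /blk_shift_ant [t t_lt3 <-]; set j' := ant (blk m) (offset j).
have blk_j' : blk m = blk j' by rewrite blk_ant modn_small ?blk_lt4.
have shiftE t' (X : 'M[C]_n) : X m (ant (blk m + t'.+1) (offset j)) = shift_blocks t' X m j'.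
  by rewrite mxE -blk_j' offset_ant.
have -> : lambda_of d m * H m (ant (blk m + t.+1) (offset j)) =
          lambdaH d H m (ant (blk m + t.+1) (offset j)) by rewrite mxE.
rewrite !shiftE; case: t t_lt3 => [|[|[|//]]] _.
- exact: diag_eq E1 _ _ blk_j'.
- exact: diag_eq E2 _ _ blk_j'.
- exact: diag_eq E3 _ _ blk_j'.
Qed.

End RhsEquation.

Section MapConstraint.
Variables (R1 R2 : comNzRingType) (g : {rmorphism R1 -> R2}) (M : nat).
Local Notation n := (4 * M)%N.
Local Notation n3 := (4 * M + 4 * M + 4 * M)%N.
Local Notation "A ^g" := (map_mx g A) : ring_scope.
Implicit Types (A H U W : 'M[R1]_n) (Z : 'M[R1]_(n, n3)).

Lemma map_diag_blocks A : (diag_blocks A)^g = diag_blocks A^g.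
Proof. by apply/matrixP=> i j; rewrite !mxE; case: ifP; rewrite ?rmorph0. Qed.

Lemma map_offdiag_blocks A : (offdiag_blocks A)^g = offdiag_blocks A^g.
Proof. by apply/matrixP=> i j; rewrite !mxE; case: ifP; rewrite ?rmorph0. Qed.

Lemma map_shift_blocks t A : (shift_blocks t A)^g = shift_blocks t A^g.
Proof. by apply/matrixP=> i j; rewrite !mxE. Qed.

Lemma map_B_of H U W Z : (B_of H U W Z)^g = B_of H^g U^g W^g Z^g.
Proof.
rewrite /B_of /Bmx /D1_of /D2_of /D3_of !map_mxD !map_mxM.
by rewrite !(map_lsubmx g, map_rsubmx g).
Qed.

Lemma map_constraint H U W Z : (constraint H U W Z)^g = constraint H^g U^g W^g Z^g.
Proof.
rewrite /constraint !(map_row_mx g) !map_mxD !map_diag_blocks !map_offdiag_blocks.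
by rewrite !map_shift_blocks map_B_of /D1_of /D2_of /D3_of !(map_lsubmx g, map_rsubmx g).
Qed.

Lemma map_lambda_of d (m : 'I_n) : g (lambda_of d m) = lambda_of (g d) m.
Proof. by rewrite rmorphM rmorph_int. Qed.

Lemma map_constraint_rhs H d : (constraint_rhs H d)^g = constraint_rhs H^g (g d).
Proof.
have map_lambdaH : (lambdaH d H)^g = lambdaH (g d) H^g.
  by apply/matrixP=> i j; rewrite !mxE rmorphM map_lambda_of.
by rewrite /constraint_rhs !(map_row_mx g) !map_diag_blocks !map_shift_blocks map_lambdaH.
Qed.

Lemma map_residual H U W i : (residual H U W i)^g = residual H^g U^g W^g i.
Proof.
have [map_det map_sol] := map_cramer (map_constraint H U W).
have map_B : (B_of H U W (solution H U W))^g = B_of H^g U^g W^g (solution H^g U^g W^g).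
  by rewrite map_B_of /solution map_sol map_constraint_rhs rmorph1.
apply/matrixP=> a b; rewrite [LHS]mxE [X in g X]mxE [RHS]mxE rmorphB rmorphM.
by rewrite map_lambda_of /sys_det map_det -map_B [map_mx g _ _ _]mxE [map_mx g H _ _]mxE.
Qed.

End MapConstraint.

Section ResidualPolynomial.
Variable M : nat.
Local Notation n := (4 * M)%N.
Local Notation n3 := (4 * M + 4 * M + 4 * M)%N.
Local Notation nvar := (4 * M * (4 * M + 4 * M + 4 * M))%N.

(* [(H U W)] with independent indeterminates as entries, laid out as in [entries]. *)
Definition generic_HUW : 'M[{mpoly C[nvar]}]_(n, n3) := vec_mx (\row_(k < nvar) 'X_k).
Definition generic_H := lsubmx (lsubmx generic_HUW).
Definition generic_U := rsubmx (lsubmx generic_HUW).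
Definition generic_W := rsubmx generic_HUW.

Definition residual_poly : {mpoly C[nvar]} :=
  \prod_(i < 4) \det (residual generic_H generic_U generic_W i).

Lemma residual_polyE (H U W : 'M[C]_n) :
  residual_poly.@[entries H U W] = \prod_(i < 4) \det (residual H U W i).
Proof.
pose ev : {rmorphism {mpoly C[nvar]} -> C} := meval (entries H U W).
have evG : map_mx ev generic_HUW = row_mx (row_mx H U) W.
  rewrite /generic_HUW map_vec_mx -[RHS]mxvecK; congr vec_mx.
  by apply/rowP=> k; rewrite !mxE; apply: mevalXU.
have evH : map_mx ev generic_H = H by rewrite /generic_H !(map_lsubmx ev) evG !row_mxKl.
have evU : map_mx ev generic_U = U.
  by rewrite /generic_U (map_rsubmx ev) (map_lsubmx ev) evG row_mxKl row_mxKr.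
have evW : map_mx ev generic_W = W by rewrite /generic_W (map_rsubmx ev) evG row_mxKr.
rewrite /residual_poly -/(ev _) rmorph_prod; apply: eq_bigr => i _.
by rewrite -det_map_mx map_residual evH evU evW.
Qed.

End ResidualPolynomial.

Section KroneckerPoint.
Variable M : nat.
Local Notation n := (4 * M)%N.
Implicit Types (g : nat -> nat -> int) (D : 'M[C]_n).

(* [kronI g] is the Kronecker product of the 4 x 4 integer matrix [g] with [I_M]. *)
Definition kronI g : 'M[C]_n :=
  \matrix_(m, k) if offset m == offset k then (g (blk m) (blk k))%:~R else 0.

Lemma kronI_mulmx g D i a j :
  (kronI g *m D) (ant i a) j = \sum_(k < 4) (g (i %% 4)%N k)%:~R * D (ant k a) j.
Proof.
rewrite mxE sum_ant; apply: eq_bigr => k _; rewrite (bigD1 a) //= big1 ?addr0.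
  by rewrite mxE !offset_ant eqxx !blk_ant (modn_small (ltn_ord k)).
by move=> c c_neq_a; rewrite mxE !offset_ant eq_sym (negbTE c_neq_a) mul0r.
Qed.

Lemma mulmx_kronI g D m j b :
  (D *m kronI g) m (ant j b) = \sum_(k < 4) D m (ant k b) * (g k (j %% 4)%N)%:~R.
Proof.
rewrite mxE sum_ant; apply: eq_bigr => k _; rewrite (bigD1 b) //= big1 ?addr0.
  by rewrite mxE !offset_ant eqxx !blk_ant (modn_small (ltn_ord k)).
by move=> c c_neq_b; rewrite mxE !offset_ant (negbTE c_neq_b) mulr0.
Qed.

Lemma sum_block_diag D : block_diag D -> forall (c : nat -> C) j a b,
  \sum_(k < 4) c k * D (ant k a) (ant j b) = c (j %% 4)%N * D (ant j a) (ant j b).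
Proof.
move=> D_bd c j a b; have j4_lt4 : (j %% 4 < 4)%N by rewrite ltn_pmod.
rewrite (bigD1 (Ordinal j4_lt4)) //= ant_mod big1 ?addr0 // => k k_neq_j.
rewrite D_bd ?mulr0 // !blk_ant (modn_small (ltn_ord k)) => e.
by move/eqP: k_neq_j; apply; apply: val_inj.
Qed.

Lemma Bmx_kronI g1 g2 g3 D1 D2 D3 :
  block_diag D1 -> block_diag D2 -> block_diag D3 -> forall i j a b,
  Bmx (kronI g1) (kronI g2) (kronI g3) D1 D2 D3 (ant i a) (ant j b) =
    (g1 (i %% 4)%N (j %% 4)%N)%:~R * D1 (ant j a) (ant j b)
  + \sum_(k < 4) (g1 (i %% 4)%N k)%:~R * D2 (ant k a) (ant k b) * (g2 k (j %% 4)%N)%:~R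
  + \sum_(k < 4) (g3 (i %% 4)%N k)%:~R * D3 (ant k a) (ant k b) * (g1 k (j %% 4)%N)%:~R.
Proof.
move=> D1_bd D2_bd D3_bd i j a b.
have addE (A B : 'M[C]_n) x y : (A + B) x y = A x y + B x y by rewrite mxE.
rewrite /Bmx !addE kronI_mulmx (sum_block_diag D1_bd (fun k => (g1 _ k)%:~R)).
rewrite !mulmx_kronI; congr (_ + _ + _); apply: eq_bigr => k _.
  by rewrite kronI_mulmx (sum_block_diag D2_bd (fun k => (g1 _ k)%:~R)) (modn_small (ltn_ord k)).
by rewrite kronI_mulmx (sum_block_diag D3_bd (fun k => (g3 _ k)%:~R)) (modn_small (ltn_ord k)).
Qed.

End KroneckerPoint.

(* The Kronecker point [(h_pt, u_pt, w_pt) ⊗ I_M], at which the constraint system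
   has the solution [(diag d1_pt, 0, diag d3_pt) ⊗ I_M]. *)
Definition h_pt (i j : nat) : int :=
  match i, j with
  | 0, 2 | 0, 3 | 1, 1 | 1, 3 | 2, 0 | 2, 1 | 2, 2 | 3, 0 | 3, 3 => 1
  | _, _ => 0 end.
Definition u_pt (i j : nat) : int :=
  match i, j with 0, 1 | 0, 2 | 1, 3 | 2, 0 | 3, 0 => 1 | _, _ => 0 end.
Definition w_pt (i j : nat) : int :=
  match i, j with 0, 1 | 0, 3 | 1, 1 | 1, 2 | 2, 0 | 3, 0 => 1 | _, _ => 0 end.
Definition d1_pt (i : nat) : int := match i with 2 => 1 | 3 => 2 | _ => 0 end.
Definition d3_pt (i : nat) : int := match i with 3 => -1 | _ => 0 end.

(* Block [(i, j)] of [B] at the witness, as a multiple of [I_M]. *)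
Definition witness_block (i j : nat) : int :=
  h_pt i j * d1_pt j + \sum_(k < 4) w_pt i k * d3_pt k * h_pt k j.

Lemma witness_block_offdiag i j : (i < 4)%N -> (j < 4)%N -> i != j ->
  witness_block i j = user_weight i * h_pt i j.
Proof.
by case: i => [|[|[|[|//]]]]; case: j => [|[|[|[|//]]]] //= _ _ _;
  rewrite /witness_block !big_ord_recr big_ord0.
Qed.

Definition residual_pt (i : nat) : int := witness_block i i - user_weight i * h_pt i i.

Lemma residual_pt_neq0 (i : 'I_4) : residual_pt i != 0.
Proof.
have := ltn_ord i; case: (nat_of_ord i) => [|[|[|[|//]]]] _;
  by rewrite /residual_pt /witness_block !big_ord_recr big_ord0.
Qed.

(* The off-diagonal block equations of [B] at the Kronecker point, written
   for one entry [(a, b)] of the blocks [A k], [B k], [C k] of [D1], [D2], [D3]. *)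
Lemma witness_system (R : pzRingType) (A B C : nat -> R) k : (k < 4)%N ->
  C 1%N = 0 -> A 2%N = 0 -> A 3%N + C 1%N + C 3%N = 0 -> B 3%N + C 2%N = 0 -> C 2%N = 0 ->
  A 3%N + B 1%N + C 1%N = 0 -> A 0%N + B 2%N = 0 -> A 1%N + B 0%N = 0 -> B 1%N + C 0%N = 0 ->
  A 0%N + B 3%N = 0 -> B 0%N = 0 -> B 0%N + C 0%N = 0 ->
  [/\ A k = 0, B k = 0 & C k = 0].
Proof.
move=> k_lt4 C1 A2 e03 e10 C2 e13 e20 e21 e23 e30 B0 e32.
move: e10 e32; rewrite C2 B0 addr0 add0r => B3 C0.
move: e21 e23 e30; rewrite B0 C0 B3 !addr0 => A1 B1 A0.
move: e20 e13; rewrite A0 B1 C1 add0r !addr0 => B2 A3.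
move: e03; rewrite A3 C1 !add0r => C3.
by move: k_lt4; case: k => [|[|[|[|//]]]].
Qed.

Section Witness.
Variable M : nat.
Local Notation n := (4 * M)%N.
Local Notation n3 := (4 * M + 4 * M + 4 * M)%N.

Definition blkscalar (g : nat -> int) : 'M[C]_n :=
  \matrix_(m, k) if m == k then (g (blk m))%:~R else 0.

Definition H_pt : 'M[C]_n := kronI M h_pt.
Definition U_pt : 'M[C]_n := kronI M u_pt.
Definition W_pt : 'M[C]_n := kronI M w_pt.
Definition Z_pt : 'M[C]_(n, n3) := row_mx (row_mx (blkscalar d1_pt) 0) (blkscalar d3_pt).

Lemma block_diag_blkscalar g : block_diag (blkscalar g).
Proof. by move=> m j neq_mj; rewrite mxE; case: eqP => // e; case: neq_mj; rewrite e. Qed.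

Lemma block_diag0 : block_diag (0 : 'M[C]_n).
Proof. by move=> m j _; rewrite mxE. Qed.

Lemma blkscalarE g i a b :
  blkscalar g (ant i a) (ant i b) = if a == b then (g (i %% 4)%N)%:~R else 0.
Proof. by rewrite mxE ant_eq eqxx blk_ant. Qed.

Lemma kronIE g i j a b :
  kronI M g (ant i a) (ant j b) = if a == b then (g (i %% 4)%N (j %% 4)%N)%:~R else 0.
Proof. by rewrite mxE !offset_ant !blk_ant. Qed.

Lemma B_of_witness i j a b :
  B_of H_pt U_pt W_pt Z_pt (ant i a) (ant j b) =
  if a == b then (witness_block (i %% 4)%N (j %% 4)%N)%:~R else 0.
Proof.
rewrite /B_of /D1_of /D2_of /D3_of /Z_pt /H_pt /U_pt /W_pt !row_mxKl !row_mxKr.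
rewrite (Bmx_kronI _ _ _ (block_diag_blkscalar _) block_diag0 (block_diag_blkscalar _)).
rewrite blkscalarE.
rewrite big1 => [|k _]; last by rewrite mxE mulr0 mul0r.
under eq_bigr => k _ do rewrite blkscalarE (modn_small (ltn_ord k)).
case: (a == b); last by rewrite mulr0 big1 ?addr0 // => k _; rewrite mulr0 mul0r.
rewrite addr0 /witness_block rmorphD rmorphM rmorph_sum; congr (_ + _).
by apply: eq_bigr => k _; rewrite !rmorphM.
Qed.

Lemma constraint_witness : constraint H_pt U_pt W_pt Z_pt = constraint_rhs H_pt 1.
Proof.
have offdiag0 g : offdiag_blocks (blkscalar g) = 0.
  apply/matrixP=> m j; rewrite !mxE; case: ifP => // /negbT neq_mj.
  by case: eqP => // e; move: neq_mj; rewrite e eqxx.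
have diag_eq t : (t < 3)%N ->
    diag_blocks (shift_blocks t (B_of H_pt U_pt W_pt Z_pt)) =
    diag_blocks (shift_blocks t (lambdaH 1 H_pt)).
  move=> t_lt3; apply/matrixP=> m j; rewrite [LHS]mxE [RHS]mxE; case: eqP => // eq_mj.
  rewrite [LHS]mxE [RHS]mxE [RHS]mxE.
  rewrite -[m]antK B_of_witness /H_pt kronIE /lambda_of blk_ant mul1r eq_mj.
  rewrite (modn_small (blk_lt4 j)); case: (offset m == offset j); last by rewrite mulr0.
  have := blk_lt4 j; case: (blk j) => [|[|[|[|//]]]] _;
    by case: t t_lt3 => [|[|[|//]]] _; rewrite -intrM witness_block_offdiag.
rewrite /constraint /constraint_rhs /D1_of /D2_of /D3_of /Z_pt !row_mxKl !row_mxKr.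
by rewrite !offdiag0 linear0 !add0r !diag_eq.
Qed.

Lemma block_diag_eq0 (D : 'M[C]_n) : block_diag D ->
  (forall k a b, (k < 4)%N -> D (ant k a) (ant k b) = 0) -> D = 0.
Proof.
move=> D_bd D_blocks0; apply/matrixP=> m j; rewrite mxE.
have [eq_mj | neq_mj] := eqVneq (blk m) (blk j); last exact/D_bd/eqP.
by rewrite -(antK m) -(antK j) -eq_mj D_blocks0 ?blk_lt4.
Qed.

Lemma constraint_witness_inj (Z : 'M[C]_(n, n3)) :
  constraint H_pt U_pt W_pt Z = 0 -> Z = 0.
Proof.
move=> Z_ker; have := @constraint_eq_rhs _ H_pt U_pt W_pt Z 0.
rewrite constraint_rhsZ scale0r => /(_ Z_ker) [D1_bd D2_bd D3_bd B_offdiag].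
have B_eq0 a b i j : (i < 4)%N -> (j < 4)%N -> i != j ->
    Bmx H_pt U_pt W_pt (D1_of Z) (D2_of Z) (D3_of Z) (ant i a) (ant j b) = 0.
  move=> i_lt4 j_lt4 neq_ij; rewrite [LHS]B_offdiag /lambda_of ?mul0r //.
  by rewrite !blk_ant !modn_small //; apply/eqP.
have blocks0 a b k : (k < 4)%N ->
    [/\ D1_of Z (ant k a) (ant k b) = 0, D2_of Z (ant k a) (ant k b) = 0
      & D3_of Z (ant k a) (ant k b) = 0].
  move=> k_lt4; apply: (witness_system (A := fun k => D1_of Z (ant k a) (ant k b))
    (B := fun k => D2_of Z (ant k a) (ant k b)) (C := fun k => D3_of Z (ant k a) (ant k b)) k_lt4);
    [ rewrite -[RHS](B_eq0 a b 0%N 1%N) | rewrite -[RHS](B_eq0 a b 0%N 2%N)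
    | rewrite -[RHS](B_eq0 a b 0%N 3%N) | rewrite -[RHS](B_eq0 a b 1%N 0%N)
    | rewrite -[RHS](B_eq0 a b 1%N 2%N) | rewrite -[RHS](B_eq0 a b 1%N 3%N)
    | rewrite -[RHS](B_eq0 a b 2%N 0%N) | rewrite -[RHS](B_eq0 a b 2%N 1%N)
    | rewrite -[RHS](B_eq0 a b 2%N 3%N) | rewrite -[RHS](B_eq0 a b 3%N 0%N)
    | rewrite -[RHS](B_eq0 a b 3%N 1%N) | rewrite -[RHS](B_eq0 a b 3%N 2%N) ] => //;
  by rewrite /H_pt /U_pt /W_pt Bmx_kronI // !big_ord_recr !big_ord0 /=; ring.
rewrite -(hsubmxK Z) -(hsubmxK (lsubmx Z)).
have -> : lsubmx (lsubmx Z) = 0.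
  by apply: (block_diag_eq0 D1_bd) => k a b /(blocks0 a b) [].
have -> : rsubmx (lsubmx Z) = 0.
  by apply: (block_diag_eq0 D2_bd) => k a b /(blocks0 a b) [].
have -> : rsubmx Z = 0.
  by apply: (block_diag_eq0 D3_bd) => k a b /(blocks0 a b) [].
by rewrite !row_mx0.
Qed.

Lemma residual_witness (i : 'I_4) :
  residual H_pt U_pt W_pt i = (sys_det H_pt U_pt W_pt * (residual_pt i)%:~R)%:M.
Proof.
have sol_pt : solution H_pt U_pt W_pt = sys_det H_pt U_pt W_pt *: Z_pt.
  by rewrite /solution -constraint_witness cramer_image.
apply/matrixP=> a b; rewrite [LHS]mxE [RHS]mxE sol_pt B_ofZ !antenna_ant.
rewrite [X in X - _]mxE B_of_witness /lambda_of /H_pt kronIE blk_ant !modn_small //.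
case: (a == b); last by rewrite !mulr0 subrr.
by rewrite mulr1n /residual_pt intrB intrM mulrBr mulrA.
Qed.

Lemma residual_poly_neq0 : residual_poly M != 0.
Proof.
apply/eqP=> P0; have := residual_polyE H_pt U_pt W_pt; rewrite P0 meval0.
move=> /esym/eqP; rewrite prodf_seq_eq0 => /hasP[i _ /=].
rewrite residual_witness det_scalar expf_eq0 mulf_eq0 intr_eq0.
by rewrite (negbTE (det_lin_mx_neq0 constraint_witness_inj)) (negbTE (residual_pt_neq0 i)) andbF.
Qed.

End Witness.

Theorem theorem6 (M : nat) (hM1 : (1 <= M)%N) (hM2 : (M <= 15)%N) :
  exists P : {mpoly C[4 * M * (4 * M + 4 * M + 4 * M)]},
    P != 0 /\
    forall H U W : 'M[C]_(4 * M),
      P.@[entries H U W] != 0 ->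
      exists (D1 D2 D3 : 'M[C]_(4 * M)) (lambda : 'I_(4 * M) -> C),
        [/\ block_diag D1, block_diag D2, block_diag D3,
          (forall m j : 'I_(4 * M), blk m <> blk j ->
             (H *m D1 + H *m D2 *m U + W *m D3 *m H) m j = lambda m * H m j) &
          (forall i : 'I_4,
             (\matrix_(a < M, b < M)
                ((H *m D1 + H *m D2 *m U + W *m D3 *m H) (antenna i a) (antenna i b)
                  - lambda (antenna i a) * H (antenna i a) (antenna i b)))
               \in unitmx)].
Proof.
exists (residual_poly M); split; first exact: residual_poly_neq0.
move=> H U W; rewrite residual_polyE prodf_seq_neq0 => /allP residual_unit.
have [D1_bd D2_bd D3_bd B_offdiag] := constraint_eq_rhs (constraint_solution H U W).
exists (D1_of (solution H U W)), (D2_of (solution H U W)), (D3_of (solution H U W)).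
exists (lambda_of (sys_det H U W)); split=> // i.
by rewrite unitmxE unitfE; exact: residual_unit i (mem_index_enum _).
Qed.
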